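(* Let $A=(a,\ ha+d,\ ha+2d,\ ha+4d,\ \dots,\ ha+2kd)$ where $\gcd(a,d)=1$, $a,h,d,k\in\mathbb{P}$, $a>2$, $d>h$, $1\le 2k\le a-1$. Write $a-1=2ks+t$ with $1\le t\le 2k$. Then \begin{align*} \sum_{r=0}^{a-1}x^{N_r}&=1+\frac{x^{ha+d}\big(1-x^{(ha+2kd)(s+1)}\big)}{1-x^{ha+2kd}}+\frac{x^{ha+2d}\big(1-x^{(ha+2kd)s}\big)\big(1-x^{2dk}\big)}{(1-x^{ha+2kd})(1-x^{2d})}\\ &\quad+\frac{x^{2ha+3d}\big(1-x^{(ha+2kd)s}\big)\big(1-x^{2d(k-1)}\big)}{(1-x^{ha+2kd})(1-x^{2d})}+f_1(x), \end{align*} where $$f_1(x)=\begin{cases}\dfrac{x^{ha(s+1)+d(2ks+2)}\big(1-x^{d(t-1)}\big)}{1-x^{2d}}+\dfrac{x^{ha(s+2)+d(2ks+3)}\big(1-x^{d(t-1)}\big)}{1-x^{2d}} & \text{if } t \text{ is odd},\\[8pt] \dfrac{x^{ha(s+1)+d(2ks+2)}\big(1-x^{dt}\big)}{1-x^{2d}}+\dfrac{x^{ha(s+2)+d(2ks+3)}\big(1-x^{d(t-2)}\big)}{1-x^{2d}} & \text{if } t \text{ is even}.\end{cases}$$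
   Context: For $A=(a,c_1,\dots,c_m)$ of positive integers with $\gcd(A)=1$ and $0\le r\le a-1$, $N_r$ is the least nonnegative integer $a_0\equiv r\pmod a$ that can be written as $\sum_{i=1}^m c_ix_i$ with all $x_i$ nonnegative integers. $\mathbb{P}=\{1,2,\dots\}$. *)

From mathcomp Require Import all_boot all_order all_algebra.
Set Implicit Arguments. Unset Strict Implicit. Unset Printing Implicit Defensive.

Definition representable (c : seq nat) (n : nat) : Prop :=
  exists xs : seq nat, size xs = size c /\
    n = \sum_(i < size c) nth 0 c i * nth 0 xs i.

(* isN a c r n : n is N_r for A = (a, c_1, ..., c_m), i.e. the least
   nonnegative integer congruent to r mod a that is representable by c. *)
Definition isN (a : nat) (c : seq nat) (r n : nat) : Prop :=
  n = r %[mod a] /\ representable c n /\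
  (forall m, m = r %[mod a] -> representable c m -> n <= m).

Definition gensA (a h d k : nat) : seq nat :=
  (h * a + d) :: [seq h * a + 2 * j * d | j <- iota 1 k].

From mathcomp Require Import all_boot all_order all_algebra.
From mathcomp Require Import zify ring.
Import GRing.Theory.

(* Every element of the semigroup generated by A is h*a*n + d*w, where n
   counts the generators used and w is their total weight (ha+d has weight 1,
   ha+2jd has weight 2j); the weights reachable with n generators are those
   with odd w <= n and w/2 <= k(n - odd w).  As a divides ha and d is
   invertible mod a, N_{dw mod a} is the least such element of weight
   congruent to w mod a; since d > h, adding a to the weight never pays, so
   N_{dw mod a} = h*a*g(w) + d*w with g(w) = odd w + ceil(w/2k) the least
   admissible n.  Because g(w + 2k) = g(w) + 1, the sum over w < a = 1 + 2ks + t
   splits into s full periods of length 2k and a partial one of length t, each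
   a combination of geometric progressions in x^(2d). *)

Set Implicit Arguments.
Unset Strict Implicit.
Unset Printing Implicit Defensive.

Lemma isN_unique a c r n1 n2 : isN a c r n1 -> isN a c r n2 -> n1 = n2.
Proof.
move=> [r1 [c1 min1]] [r2 [c2 min2]].
by apply/eqP; rewrite eqn_leq min1 ?min2.
Qed.

Section Representable.
Variable c : seq nat.

Lemma representableD m n :
  representable c m -> representable c n -> representable c (m + n).
Proof.
move=> [xs [_ ->]] [ys [_ ->]].
exists (mkseq (fun i => nth 0 xs i + nth 0 ys i) (size c)); rewrite size_mkseq.
by split=> //; rewrite -big_split; apply: eq_bigr => i _; rewrite nth_mkseq // mulnDr.
Qed.

Lemma representable_nthM q j : j < size c -> representable c (q * nth 0 c j).
Proof.
move=> lt_j; exists (mkseq (fun i => if i == j then q else 0) (size c)).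
rewrite size_mkseq (bigD1 (Ordinal lt_j)) //= nth_mkseq // eqxx mulnC big1 ?addn0 //.
by move=> i neq_ij; rewrite nth_mkseq // ifN ?muln0.
Qed.

End Representable.

Lemma coprime_mulmod_inj a d u w :
  coprime a d -> d * u = d * w %[mod a] -> u = w %[mod a].
Proof.
move=> co; wlog le_uw : u w / u <= w => [W|].
  by case/orP: (leq_total u w) => [/W//|/W W' /esym/W'/esym].
move=> /eqP; rewrite eq_sym eqn_mod_dvd ?leq_mul2l ?le_uw ?orbT // -mulnBr.
by rewrite Gauss_dvdr // => dvd_a; apply/eqP; rewrite eq_sym eqn_mod_dvd.
Qed.

(* The least number of generators of [gensA a h d k] of total weight [w]:
   one [ha+d] if [w] is odd, and ceil(w./2 / k) of the [ha+2jd]. *)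
Definition gen_count (k w : nat) : nat := odd w + (w./2 + k.-1) %/ k.

Definition Nweight (H d k w : nat) : nat := H * gen_count k w + d * w.

Section GenCount.
Variable k : nat.
Hypothesis k_gt0 : 0 < k.

Lemma gen_count0 : gen_count k 0 = 0.
Proof. rewrite /gen_count; nia. Qed.

Lemma gen_count1 : gen_count k 1 = 1.
Proof. rewrite /gen_count; nia. Qed.

Lemma gen_count_small w : 0 < w./2 <= k -> gen_count k w = (odd w).+1.
Proof. rewrite /gen_count; nia. Qed.

Lemma gen_countD w : gen_count k (w + 2 * k) = (gen_count k w).+1.
Proof. rewrite /gen_count; nia. Qed.

Lemma gen_count_half_bounds w :
  gen_count k w - odd w <= w./2 <= k * (gen_count k w - odd w).
Proof. rewrite /gen_count; nia. Qed.

Lemma gen_count_min n w :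
  odd w <= n -> w./2 <= k * (n - odd w) -> gen_count k w <= n.
Proof. rewrite /gen_count; nia. Qed.

Lemma gen_count_leS n v w :
  odd v <= n -> v./2 <= k * (n - odd v) -> w <= v -> gen_count k w <= n.+1.
Proof. by rewrite /gen_count => *; have := odd_double_half v; nia. Qed.

Variables H d : nat.

Lemma Nweight0 : Nweight H d k 0 = 0.
Proof. by rewrite /Nweight gen_count0 // !muln0. Qed.

Lemma Nweight1 : Nweight H d k 1 = H + d.
Proof. by rewrite /Nweight gen_count1 // !muln1. Qed.

Lemma NweightD w : Nweight H d k (2 * k + w) = H + 2 * k * d + Nweight H d k w.
Proof. by rewrite /Nweight [2 * k + w]addnC gen_countD //; ring. Qed.

End GenCount.

Section Generators.
Variables a h d k : nat.
Hypothesis k_gt0 : 0 < k.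
Local Notation A := (gensA a h d k).

Lemma size_gensA : size A = k.+1.
Proof. by rewrite /= size_map size_iota. Qed.

Lemma nth_gensA j : 0 < j <= k -> nth 0 A j = h * a + 2 * j * d.
Proof. by case: j => // j /= lt_jk; rewrite (nth_map 0) ?size_iota ?nth_iota. Qed.

Lemma representable_gensA_even n q :
  n <= q <= k * n -> representable A (h * a * n + d * (2 * q)).
Proof.
elim: n q => [|n IHn] q q_bounds.
  have -> : q = 0 by lia.
  by rewrite !muln0; have := @representable_nthM A 0 0; rewrite size_gensA; apply.
pose j := minn k (q - n).
have j_bounds : 0 < j <= k by lia.
have -> : h * a * n.+1 + d * (2 * q) = 1 * nth 0 A j + (h * a * n + d * (2 * (q - j))).
  rewrite nth_gensA //; nia.
apply: representableD; first by apply: representable_nthM; rewrite size_gensA; lia.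
by apply: IHn; rewrite /j; nia.
Qed.

Lemma representable_Nweight w : representable A (Nweight (h * a) d k w).
Proof.
have /andP[c_le le_c] := gen_count_half_bounds k_gt0 w.
have -> : Nweight (h * a) d k w =
    odd w * nth 0 A 0 + (h * a * (gen_count k w - odd w) + d * (2 * w./2)).
  have : odd w <= gen_count k w by exact: leq_addr.
  rewrite /Nweight /=; nia.
apply: representableD; first by apply: representable_nthM; rewrite size_gensA.
by apply: representable_gensA_even; rewrite c_le le_c.
Qed.

Lemma representable_gensA_decomp m : representable A m ->
  exists n w, [/\ m = h * a * n + d * w, odd w <= n & w./2 <= k * (n - odd w)].
Proof.
move=> [xs [_ ->]]; rewrite size_gensA big_ord_recl.
set x0 := nth 0 xs 0.
set P := \sum_(i < k) nth 0 xs i.+1.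
set E := \sum_(i < k) i.+1 * nth 0 xs i.+1.
have -> : \sum_(i < k) nth 0 A (lift ord0 i) * nth 0 xs (lift ord0 i) =
          h * a * P + d * (2 * E).
  rewrite /P /E !big_distrr -big_split; apply: eq_bigr => i _.
  by rewrite !lift0 nth_gensA ?ltn_ord //=; ring.
have E_le : E <= k * P.
  by rewrite /E /P big_distrr leq_sum // => i _; rewrite leq_mul2r ltn_ord orbT.
by exists (x0 + P), (x0 + 2 * E); split=> /=; nia.
Qed.

End Generators.

Lemma isN_Nweight a h d k w : coprime a d -> 0 < k -> h < d -> w < a ->
  isN a (gensA a h d k) (d * w %% a) (Nweight (h * a) d k w).
Proof.
move=> co k_gt0 h_lt_d w_lt_a.
have mod_ha n v : h * a * n + d * v = d * v %[mod a] by rewrite mulnAC modnMDl.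
split; [|split]; first by rewrite /Nweight mod_ha modn_mod.
  exact: representable_Nweight.
move=> m m_mod /(representable_gensA_decomp k_gt0) [n [v [m_eq odd_v half_v]]].
have v_mod : v = w %[mod a].
  by apply: (coprime_mulmod_inj co); rewrite -(mod_ha n) -m_eq m_mod modn_mod.
have v_eq : v = v %/ a * a + w by rewrite {1}(divn_eq v a) v_mod modn_small.
rewrite m_eq /Nweight; case: (posnP (v %/ a)) => [q0 | q_gt0].
  have v_w : v = w by rewrite v_eq q0.
  rewrite v_w in odd_v half_v *.
  by rewrite leq_add2r leq_mul2l gen_count_min ?orbT.
have a_w_le : a + w <= v by rewrite [X in _ <= X]v_eq leq_add2r leq_pmull.
have gen_le : gen_count k w <= n.+1.
  by apply: (gen_count_leS k_gt0 odd_v half_v); rewrite (leq_trans (leq_addl a w)).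
have ha_le : h * a * gen_count k w <= h * a * n + d * a.
  rewrite (leq_trans (leq_mul (leqnn _) gen_le)) // mulnS addnC leq_add2l.
  by rewrite leq_mul2r (ltnW h_lt_d) orbT.
have := leq_mul (leqnn d) a_w_le; rewrite mulnDr; lia.
Qed.

Local Open Scope ring_scope.

Lemma sum_mulmod (V : nmodType) a d (F : nat -> V) :
  coprime a d -> \sum_(r < a) F r = \sum_(w < a) F (d * w %% a)%N.
Proof.
case: a => [|a] co; first by rewrite !big_ord0.
pose mul_d (w : 'I_a.+1) := Ordinal (ltn_pmod (d * w)%N (ltn0Sn a)).
have mul_d_inj : injective mul_d.
  move=> u v /(congr1 val) /(coprime_mulmod_inj co).
  by rewrite !modn_small // => /val_inj.
by rewrite (reindex_inj mul_d_inj).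
Qed.

Lemma sum_periodic (R : pzSemiRingType) (f : nat -> R) (y : R) p s t :
  (forall w, f (p + w)%N = y * f w) ->
  \sum_(w < p * s + t) f w =
    (\sum_(i < s) y ^+ i) * \sum_(u < p) f u + y ^+ s * \sum_(u < t) f u.
Proof.
move=> f_period; elim: s => [|s IHs]; first by rewrite muln0 big_ord0 mul0r add0r mul1r.
rewrite mulnS -addnA big_split_ord /=.
under [X in _ + X = _]eq_bigr do rewrite f_period.
rewrite -mulr_sumr IHs big_ord_recl expr0.
under [X in (1 + X) * _]eq_bigr do rewrite lift0 exprS.
by rewrite -mulr_sumr exprS mulrDl mul1r mulrDr !mulrA addrA.
Qed.

Lemma sum_even_odd (V : nmodType) (f : nat -> V) n :
  \sum_(i < n) f i = \sum_(j < uphalf n) f j.*2 + \sum_(j < n./2) f j.*2.+1.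
Proof.
elim: n f => [|n IHn] f; first by rewrite !big_ord0 addr0.
rewrite big_ord_recl; under eq_bigr do rewrite lift0.
rewrite (IHn (fun i => f i.+1)) [in RHS]big_ord_recl.
under [X in _ = _ + X + _]eq_bigr do rewrite lift0 doubleS.
by rewrite addrAC -addrA.
Qed.

Lemma sum_geom (R : fieldType) (y : R) n :
  1 - y != 0 -> \sum_(i < n) y ^+ i = (1 - y ^+ n) / (1 - y).
Proof. by move=> ?; rewrite -[1 - y ^+ n]opprB subrX1 -mulNr opprB mulrC mulKf. Qed.

Section NweightSums.
Variables (H d k : nat).
Hypothesis k_gt0 : (0 < k)%N.

Lemma sum_Nweight_block (R : pzSemiRingType) (x : R) L : (0 < L <= 2 * k)%N ->
  \sum_(u < L) x ^+ Nweight H d k u.+1 =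
    x ^+ (H + d) + x ^+ (H + 2 * d) * \sum_(j < uphalf L.-1) (x ^+ (2 * d)) ^+ j
    + x ^+ (2 * H + 3 * d) * \sum_(j < L.-1./2) (x ^+ (2 * d)) ^+ j.
Proof.
case: L => // L /andP[_ L_le].
rewrite big_ord_recl Nweight1 //; under eq_bigr do rewrite lift0.
rewrite (sum_even_odd (fun u => x ^+ Nweight H d k u.+2)) !mulr_sumr addrA.
congr (_ + _ + _); apply: eq_bigr => j _; rewrite -exprM -exprD /Nweight.
- rewrite gen_count_small //=; last by have := ltn_ord j; lia.
  by rewrite negbK odd_double; congr (_ ^+ _); nia.
- rewrite gen_count_small //=; last by have := ltn_ord j; lia.
  by rewrite odd_double; congr (_ ^+ _); nia.
Qed.

Lemma sum_Nweight (R : pzSemiRingType) (x : R) s t n :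
  (0 < t <= 2 * k)%N -> n = (2 * k * s + t).+1 ->
  \sum_(w < n) x ^+ Nweight H d k w =
    1 + (\sum_(i < s) (x ^+ (H + 2 * k * d)) ^+ i)
        * (x ^+ (H + d) + x ^+ (H + 2 * d) * \sum_(j < k) (x ^+ (2 * d)) ^+ j
           + x ^+ (2 * H + 3 * d) * \sum_(j < k - 1) (x ^+ (2 * d)) ^+ j)
      + (x ^+ (H + 2 * k * d)) ^+ s
        * (x ^+ (H + d) + x ^+ (H + 2 * d) * \sum_(j < uphalf t.-1) (x ^+ (2 * d)) ^+ j
           + x ^+ (2 * H + 3 * d) * \sum_(j < t.-1./2) (x ^+ (2 * d)) ^+ j).
Proof.
move=> t_bounds ->; rewrite big_ord_recl Nweight0 // expr0 -addrA.
under eq_bigr do rewrite lift0.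
rewrite (@sum_periodic _ (fun w => x ^+ Nweight H d k w.+1) (x ^+ (H + 2 * k * d))); last first.
  by move=> w; rewrite -addnS NweightD // exprD.
rewrite !sum_Nweight_block ?muln_gt0 ?k_gt0 ?leqnn //.
have -> : uphalf (2 * k).-1 = k by lia.
by have -> : (2 * k).-1./2 = (k - 1)%N by lia.
Qed.

End NweightSums.

Theorem mainTheorem14 (R : fieldType) (a h d k s t : nat) (N : nat -> nat)
  (x : R) :
  coprime a d -> (0 < h)%N -> (0 < k)%N -> (2 < a)%N -> (h < d)%N ->
  (1 <= 2 * k <= a - 1)%N ->
  (a - 1 = 2 * k * s + t)%N -> (1 <= t <= 2 * k)%N ->
  (forall r, (r < a)%N -> isN a (gensA a h d k) r (N r)) ->
  1 - x ^+ (h * a + 2 * k * d) != 0 -> 1 - x ^+ (2 * d) != 0 ->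
  \sum_(r < a) x ^+ N r =
    1
    + x ^+ (h * a + d) * (1 - x ^+ ((h * a + 2 * k * d) * (s + 1)))
        / (1 - x ^+ (h * a + 2 * k * d))
    + x ^+ (h * a + 2 * d) * (1 - x ^+ ((h * a + 2 * k * d) * s))
        * (1 - x ^+ (2 * d * k))
        / ((1 - x ^+ (h * a + 2 * k * d)) * (1 - x ^+ (2 * d)))
    + x ^+ (2 * h * a + 3 * d) * (1 - x ^+ ((h * a + 2 * k * d) * s))
        * (1 - x ^+ (2 * d * (k - 1)))
        / ((1 - x ^+ (h * a + 2 * k * d)) * (1 - x ^+ (2 * d)))
    + (if odd t then
         x ^+ (h * a * (s + 1) + d * (2 * k * s + 2)) * (1 - x ^+ (d * (t - 1)))
           / (1 - x ^+ (2 * d))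
         + x ^+ (h * a * (s + 2) + d * (2 * k * s + 3)) * (1 - x ^+ (d * (t - 1)))
           / (1 - x ^+ (2 * d))
       else
         x ^+ (h * a * (s + 1) + d * (2 * k * s + 2)) * (1 - x ^+ (d * t))
           / (1 - x ^+ (2 * d))
         + x ^+ (h * a * (s + 2) + d * (2 * k * s + 3)) * (1 - x ^+ (d * (t - 2)))
           / (1 - x ^+ (2 * d))).
Proof.
move=> co _ k_gt0 a_gt2 h_lt_d _ a_eq t_bounds HN nY nZ.
have -> : \sum_(r < a) x ^+ N r = \sum_(w < a) x ^+ Nweight (h * a) d k w.
  rewrite (sum_mulmod (fun r => x ^+ N r) co); apply: eq_bigr => w _; congr (_ ^+ _).
  have a_gt0 : (0 < a)%N by lia.
  exact: isN_unique (HN _ (ltn_pmod _ a_gt0)) (isN_Nweight co k_gt0 h_lt_d (ltn_ord w)).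
rewrite (sum_Nweight _ _ k_gt0 x t_bounds (_ : a = (2 * k * s + t).+1)); last lia.
rewrite [(2 * (h * a))%N]mulnA.
rewrite (_ : h * a * (s + 1) + d * (2 * k * s + 2) =
             (h * a + 2 * k * d) * s + (h * a + 2 * d))%N; last by ring.
rewrite (_ : h * a * (s + 2) + d * (2 * k * s + 3) =
             (h * a + 2 * k * d) * s + (2 * h * a + 3 * d))%N; last by ring.
rewrite !(exprD x ((h * a + 2 * k * d) * s)) !(exprM x (h * a + 2 * k * d)).
have tail_exps : if odd t
    then uphalf t.-1 = t.-1./2 /\ (d * (t - 1) = 2 * d * t.-1./2)%N
    else (d * t = 2 * d * uphalf t.-1)%N /\ (d * (t - 2) = 2 * d * t.-1./2)%N.
  case: ifP => t_odd.
    have t_eq : (t - 1 = 2 * t.-1./2)%N by lia.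
    by split; [lia | nia].
  have t_eq : (t = 2 * uphalf t.-1)%N by lia.
  have t_eq' : (t - 2 = 2 * t.-1./2)%N by lia.
  by split; nia.
case: ifP tail_exps => _ [-> ->].
all: rewrite !(exprM x (2 * d)) !sum_geom // addn1 exprSr.
all: by field; rewrite nY nZ.
Qed.
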